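(* Let $p$ be an odd prime and $G$ the non-abelian group of order $p^3$ and exponent $p$. Let $S$ be a sequence over $G$ of length $3p-2$ none of whose terms lies in $Z(G)$, and suppose that for some non-central $z$-class $\mathcal{K}$ of $G$ exactly $p$ terms of $S$ (counted with multiplicity) lie in $\mathcal{K}$, and that these $p$ terms are pairwise conjugate in $G$. Then $S$ has a non-empty product-one subsequence.
   Context: $G = \langle x, y : x^p = y^p = 1,\ [y,x] \text{ central}\rangle$ is the Heisenberg group of order $p^3$ and exponent $p$, with $Z(G)=[G,G]$ of order $p$. For $g\in G\setminus Z(G)$, its $z$-class is $\mathcal{K}[g] = \{g^\lambda u : 1\le\lambda\le p-1,\ u\in Z(G)\} = C_G(g)\setminus Z(G)$. A sequence over $G$ is a finite unordered list (multiset) of elements of $G$; a subsequence is a sub-multiset; a non-empty sequence is product-one if some ordering of its terms has product $1$. *)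

From mathcomp Require Import all_boot all_fingroup all_solvable.
Set Implicit Arguments. Unset Strict Implicit. Unset Printing Implicit Defensive.
Local Open Scope group_scope.

Definition zclass (gT : finGroupType) (p : nat) (G : {set gT}) (g : gT) : {set gT} :=
  [set x | [exists l : 'I_p, (0 < (l : nat))%N && [exists u in 'Z(G), x == g ^+ l * u]]].

(* T is a subsequence (sub-multiset) of S *)
Definition submultiset (T : eqType) (s t : seq T) : Prop :=
  forall x, (count_mem x s <= count_mem x t)%N.

Definition product_one (gT : finGroupType) (s : seq gT) : Prop :=
  s <> [::] /\ exists s', perm_eq s s' /\ \prod_(x <- s') x = 1.

(* The p terms of S in the z-class K are conjugate to one of them, a, so they all
   lie in the coset a Z(G) and have the same commutator [~ b, a] with every b.
   Since G / Z(G) is elementary abelian of rank 2, the Chevalley-Warning argument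
   (Olson's bound D(C_p^2) = 2p - 1) finds among the 2p - 2 remaining terms a
   nonempty B whose product lies in Z(G) or in a Z(G); adding p or p - 1 terms of
   K makes the product central.  A term b of B lies outside K, so w = [~ b, a]
   generates Z(G), and moving b past j of the K-terms multiplies the product by
   w ^+ j, which can be chosen to cancel it. *)
From mathcomp Require Import all_boot all_fingroup all_solvable all_algebra all_field.
From mathcomp Require Import mxabelem zify.
Set Implicit Arguments. Unset Strict Implicit. Unset Printing Implicit Defensive.

Import GRing.Theory.

Section AlternatingSums.
Local Open Scope ring_scope.
Variables (R : comNzRingType) (I : finType).

Lemma alternating_sum_supersets (X : {set I}) :
  X != setT -> \sum_(J : {set I}) (-1) ^+ #|J| * (X \subset J)%:R = 0 :> R.
Proof.
move=> XT; have [i iX] : exists i, i \notin X.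
  by apply/existsP; rewrite -negb_forall; apply: contra XT => /forallP X_T;
     apply/eqP/setP=> j; rewrite inE X_T.
(* toggling [i] reverses the sign and does not affect [X \subset J] *)
pose h (J : {set I}) := if i \in J then J :\ i else i |: J.
have hK : involutive h.
  move=> J; rewrite /h; case: (boolP (i \in J)) => iJ.
    by rewrite !inE eqxx /= setD1K.
  by rewrite !inE eqxx /= setU1K.
rewrite (bigID (fun J : {set I} => i \in J)) /=.
rewrite (reindex h) /=; last by exists h => J _; rewrite hK.
rewrite (eq_big (fun J : {set I} => i \notin J)
                (fun J => - ((-1) ^+ #|J| * (X \subset J)%:R : R))).
- by rewrite sumrN addNr.
- by move=> J; rewrite /h; case: (boolP (i \in J)); rewrite !inE eqxx.
move=> J; rewrite /h; case: (boolP (i \in J)) => [|iJ _]; first by rewrite !inE eqxx.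
rewrite cardsU1 iJ exprS mulN1r mulNr.
congr (- (_ * _)); congr ((nat_of_bool _)%:R); apply/idP/idP => [XiJ|/subset_trans-> //].
  apply/subsetP=> x Xx; have:= subsetP XiJ x Xx.
  by rewrite !inE => /predU1P[xi|//]; move: iX; rewrite -xi Xx.
exact: subsetUr.
Qed.

(* After expanding the product, each monomial only involves the image of a map
   ['I_(size fs) -> I], a proper subset of [I]. *)
Lemma alternating_sum_prod_subset_sums (fs : seq (I -> R)) :
  (size fs < #|I|)%N ->
  \sum_(J : {set I}) (-1) ^+ #|J| * \prod_(f <- fs) \sum_(i in J) f i = 0.
Proof.
move=> fsI; set k := size fs; set x := tnth (in_tuple fs).
have expand (J : {set I}) : \prod_(f <- fs) \sum_(i in J) f i =
    \sum_(phi : {ffun 'I_k -> I}) ([set phi j | j : 'I_k] \subset J)%:R *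
       \prod_(j < k) x j (phi j).
  rewrite big_tnth -/x (eq_bigr (fun j => \sum_i (i \in J)%:R * x j i)); last first.
    by move=> j _; rewrite big_mkcond; apply: eq_bigr => i _; case: (i \in J);
       rewrite ?mul1r ?mul0r.
  rewrite bigA_distr_bigA; apply: eq_bigr => phi _.
  have [sub | nsub] := boolP (_ \subset J).
    by rewrite mul1r; apply: eq_bigr => j _; rewrite (subsetP sub) ?mul1r ?imset_f.
  have [_ /imsetP[j _ ->] phijJ] := subsetPn nsub.
  by rewrite mul0r (bigD1 j) //= (negPf phijJ) !mul0r.
under eq_bigr => J _ do rewrite expand big_distrr.
rewrite exchange_big /= big1 // => phi _.
under eq_bigr => J _ do rewrite mulrA.
rewrite -big_distrl /= alternating_sum_supersets ?mul0r //.
apply/eqP=> imT; move: fsI; rewrite -cardsT -imT ltnNge.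
by rewrite (leq_trans (leq_imset_card _ _)) // card_ord.
Qed.

Lemma alternating_sum_prod_subset_sums_complements (e : nat) (fs gs : seq (I -> R)) :
  (size fs + size gs * e < #|I|)%N ->
  \sum_(J : {set I}) (-1) ^+ #|J| * ((\prod_(f <- fs) \sum_(i in J) f i) *
     \prod_(g <- gs) (1 - (\sum_(i in J) g i) ^+ e)) = 0.
Proof.
elim: gs fs => [|g gs IHgs] fs size_lt.
  under eq_bigr => J _ do rewrite big_nil mulr1.
  by apply: alternating_sum_prod_subset_sums; rewrite /= mul0n addn0 in size_lt.
have power (J : {set I}) :
    (\prod_(f <- fs) \sum_(i in J) f i) * (\sum_(i in J) g i) ^+ e =
    \prod_(f <- fs ++ nseq e g) \sum_(i in J) f i.
  by rewrite big_cat big_nseq iter_mulr_1.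
have distr (s A y B : R) : s * (A * ((1 - y) * B)) = s * (A * B) - s * (A * y * B).
  by rewrite mulrBl mul1r !mulrBr !mulrA.
under eq_bigr => J _ do rewrite big_cons distr power.
rewrite sumrB IHgs ?IHgs ?subr0 //; first by rewrite size_cat size_nseq -addnA.
by apply: leq_ltn_trans size_lt; rewrite leq_add2l mulSn leq_addl.
Qed.

End AlternatingSums.

Section ZeroSums.
Local Open Scope ring_scope.
Variable F : finFieldType.

Lemma expf_card_pred (x : F) : x != 0 -> x ^+ #|F|.-1 = 1.
Proof.
move=> x0; apply: (mulfI x0); rewrite -exprS prednK ?mulr1 ?expf_card //.
exact: ltnW (finNzRing_gt1 F).
Qed.

(* Chevalley-Warning: [\prod_c (1 - s_c(J) ^+ #|F|.-1)] is the indicator of a zero sum. *)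
Lemma zero_sum_subset (I : finType) (n : nat) (v : I -> 'rV[F]_n) :
  (n * #|F|.-1 < #|I|)%N -> exists2 J : {set I}, J != set0 & \sum_(i in J) v i = 0.
Proof.
move=> nI.
have [J /andP[J0 /eqP sumJ] | no_sum] :=
  pickP [pred J : {set I} | (J != set0) && (\sum_(i in J) v i == 0)].
  by exists J.
pose gs := [seq (fun i => v i 0 c) | c <- enum 'I_n].
have indicator (J : {set I}) :
    \prod_(g <- gs) (1 - (\sum_(i in J) g i) ^+ #|F|.-1) = (J == set0)%:R.
  have [-> | J0] := eqVneq J set0.
    rewrite big1 // => g _.
    by rewrite big_set0 expr0n -subn1 subn_eq0 leqNgt finNzRing_gt1 subr0.
  have /eqP/rowP/eqfunP/forallPn[c sum_c] : \sum_(i in J) v i != 0.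
    by have := no_sum J; rewrite /= J0 /= => /negbT.
  rewrite mxE summxE in sum_c.
  rewrite big_map (bigD1_seq c) ?mem_enum ?enum_uniq //=.
  by rewrite expf_card_pred // subrr mul0r.
have := @alternating_sum_prod_subset_sums_complements _ _ #|F|.-1 [::] gs.
rewrite size_map size_enum_ord => /(_ nI).
rewrite (bigD1 set0) //= [X in _ + X]big1 => [|J J0].
  by rewrite addr0 indicator eqxx cards0 big_nil !mul1r => /eqP; rewrite oner_eq0.
by rewrite big_nil mul1r indicator (negPf J0) mulr0.
Qed.

End ZeroSums.

Local Open Scope group_scope.

Section ElementaryAbelian.
Variables (gT : finGroupType) (p : nat) (E : {group gT}).
Hypotheses (p_pr : prime p) (abelE : p.-abelem E).

Lemma abelem_mask_prod1 (s : seq gT) :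
  {subset s <= E} -> (logn p #|E| * p.-1 < size s)%N ->
  exists m : bitseq, mask m s != [::] /\ \prod_(x <- mask m s) x = 1.
Proof.
move=> sE size_s; have [E1 | ntE] := eqVneq E 1%G.
  exists (nseq (size s) true); rewrite mask_true //; split.
    by rewrite -size_eq0 -lt0n (leq_ltn_trans _ size_s).
  by rewrite big_seq big1 // => x /sE; rewrite E1 inE => /eqP.
pose v i := abelem_rV abelE ntE (tnth (in_tuple s) i).
have [|J J0 sumJ] := @zero_sum_subset _ _ _ v.
  by rewrite card_Fp // card_ord (dim_abelemE abelE ntE).
pose m := [seq i \in J | i <- enum 'I_(size s)].
have nth_m (i : 'I_(size s)) : nth false m i = (i \in J).
  by rewrite (nth_map i) ?size_enum_ord // nth_ord_enum.
exists m; split.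
  apply: contraNneq J0 => m0; rewrite -cards_eq0 -sum1_card.
  have := sum1_size (mask m s); rewrite big_mask m0 /= => sum0.
  by apply/eqP; rewrite -[RHS]sum0; apply: eq_bigl => i; rewrite andbT nth_m.
rewrite big_mask (eq_bigl (mem J)) => [|i]; last by rewrite andbT nth_m.
have sK i : tnth (in_tuple s) i = rVabelem abelE ntE (v i).
  by rewrite abelem_rV_K ?sE ?mem_tnth.
under eq_bigr => i _ do rewrite sK.
by rewrite -(big_morph _ (rVabelemD abelE ntE) (rVabelem0 abelE ntE)) sumJ rVabelem0.
Qed.

(* A zero-sum subsequence of [t^-1 :: s] either avoids [t^-1] or shows that its
   other terms multiply to [t]. *)
Lemma abelem_mask_prod1_or (s : seq gT) (t : gT) :
  {subset s <= E} -> t \in E -> t != 1 -> (logn p #|E| * p.-1 <= size s)%N ->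
  exists m : bitseq, mask m s != [::] /\ \prod_(x <- mask m s) x \in [set 1; t].
Proof.
move=> sE tE t1 size_s.
have sE' : {subset t^-1 :: s <= E} by move=> x /predU1P[-> | /sE]; rewrite ?groupV.
have [[|[] m] [/= ne1 prod1]] := abelem_mask_prod1 sE' size_s; first by [].
  move: prod1; rewrite big_cons => /(canRL (mulKVg t)); rewrite mulg1 => prod_t.
  exists m; rewrite -prod_t !inE eqxx orbT; split=> //.
  by apply: contra_neq t1 => m0; rewrite -prod_t m0 big_nil.
by exists m; rewrite prod1 !inE eqxx.
Qed.

End ElementaryAbelian.

Lemma group_prod_seq (gT : finGroupType) (G : {group gT}) (s : seq gT) :
  {subset s <= G} -> \prod_(x <- s) x \in G.
Proof. by move=> sG; rewrite big_seq group_prod. Qed.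

Lemma commg_prod (gT : finGroupType) (b w : gT) (s : seq gT) :
  {in s, forall x, [~ b, x] = w} -> {in s, forall x, commute w x} ->
  [~ b, \prod_(x <- s) x] = w ^+ size s.
Proof.
elim: s => [|x s IHs] bs_w w_s; first by rewrite big_nil commg1.
have s_xs : {subset s <= x :: s} by move=> y sy; rewrite inE sy orbT.
have w_prod : commute w (\prod_(y <- s) y).
  by rewrite big_seq; apply: big_ind => [|y z|y /s_xs/w_s //];
     [exact: commute1 | exact: commuteM].
rewrite big_cons commgMJ IHs => [|y /s_xs|y /s_xs]; [|exact: bs_w|exact: w_s].
by rewrite bs_w ?mem_head // conjgE w_prod mulKg -expgSr.
Qed.

Lemma prod_cat_commg (gT : finGroupType) (s1 s2 r : seq gT) (b w : gT) :
  {in s2, forall x, [~ b, x] = w} -> {in s2 ++ r, forall x, commute w x} ->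
  \prod_(x <- s1 ++ b :: s2 ++ r) x = \prod_(x <- s1 ++ s2 ++ b :: r) x * w ^+ size s2.
Proof.
move=> bs2_w w_s2r.
have w_r : commute (w ^+ size s2) (\prod_(x <- r) x).
  apply: (commuteX2 _ 1); rewrite big_seq; apply: big_ind => [|y z|y ry];
    [exact: commute1 | exact: commuteM | by apply: w_s2r; rewrite mem_cat ry orbT].
rewrite !big_cat !big_cons big_cat -!mulgA; congr (_ * _).
rewrite /= mulgA (commgC b) (commg_prod bs2_w) => [|x s2x]; first by rewrite -!mulgA w_r.
by apply: w_s2r; rewrite mem_cat s2x.
Qed.

Lemma submultiset_cat_filter (T : eqType) (P : pred T) (s1 s2 t : seq T) :
  subseq s1 [seq x <- t | P x] -> subseq s2 [seq x <- t | ~~ P x] ->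
  submultiset (s1 ++ s2) t.
Proof.
move=> s1t s2t x; have /permPl/seq.permP <- := perm_filterC P t.
by rewrite !count_cat leq_add // leq_count_subseq.
Qed.

Section Heisenberg.
Variables (gT : finGroupType) (G : {group gT}) (p : nat).
Hypotheses (p_pr : prime p) (oG : #|G| = (p ^ 3)%N) (ncG : ~~ abelian G)
  (expG : exponent G = p).

Let pG : p.-group G. Proof. by rewrite /pgroup oG pnatX pnat_id. Qed.

Let esG : extraspecial G.
Proof. by apply: p3group_extraspecial pG ncG _; rewrite oG pfactorK. Qed.

Let nZG : G \subset 'N('Z(G)). Proof. exact: normal_norm (center_normal G). Qed.

Lemma card_center_p3group : #|'Z(G)| = p.
Proof. exact: card_center_extraspecial pG esG. Qed.

Lemma commg_center x y : x \in G -> y \in G -> [~ x, y] \in 'Z(G).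
Proof. by move=> xG yG; case: esG => [[_ <-] _]; rewrite derg1 mem_commg. Qed.

Lemma order_p3group x : x \in G -> x != 1 -> #[x] = p.
Proof.
move=> xG x1; apply/(prime_nt_dvdP p_pr); first by rewrite order_eq1.
by rewrite -expG dvdn_exponent.
Qed.

Lemma cycle_center w : w \in 'Z(G) -> w != 1 -> <[w]> = 'Z(G).
Proof.
move=> wZ w1; apply/eqP; rewrite eqEcard cycle_subG wZ card_center_p3group.
by rewrite -orderE order_p3group ?leqnn //; case/setIP: wZ.
Qed.

Lemma quotient_center_abelem : p.-abelem (G / 'Z(G)).
Proof.
apply/(abelemP p_pr); split; first by case: esG => [[_ <-] _]; exact: sub_der1_abelian.
move=> _ /morphimP[x Nx Gx ->].
by rewrite -morphX // -expG expg_exponent // morph1.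
Qed.

Lemma logn_quotient_center : logn p #|G / 'Z(G)| = 2.
Proof.
rewrite card_quotient // -divgS ?center_sub // oG card_center_p3group.
by rewrite expnS mulKn ?prime_gt0 // pfactorK.
Qed.

Lemma center_sub_cent1 g : g \in G -> 'Z(G) \subset 'C_G[g].
Proof.
move=> gG; rewrite subsetI center_sub sub_cent1; apply: (subsetP _ g gG).
by rewrite centsC subsetIr.
Qed.

Lemma card_cycle_center g : g \in G :\: 'Z(G) -> #|<[g]> * 'Z(G)| = (p ^ 2)%N.
Proof.
case/setDP=> gG gZ; have g1 : g != 1 by apply: contraNneq gZ => ->; apply: group1.
have og : #|<[g]>| = p by rewrite -orderE order_p3group.
have TI : <[g]> :&: 'Z(G) = 1 by apply: prime_TIg; rewrite ?og // cycle_subG.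
have := mul_cardG <[g]> 'Z(G); rewrite TI cards1 muln1 og card_center_p3group => <-.
by rewrite expnS expn1.
Qed.

Lemma cent1_noncentral g : g \in G :\: 'Z(G) -> 'C_G[g] = <[g]> * 'Z(G).
Proof.
move=> gGZ; have /setDP[gG gZ] := gGZ.
have sHC : <[g]> * 'Z(G) \subset 'C_G[g].
  by rewrite mul_subG ?cycle_subG ?subcent1_id ?center_sub_cent1.
apply/eqP; rewrite eq_sym eqEcard sHC card_cycle_center //.
have /(dvdn_pfactor _ _ p_pr)[e e3 oC] : #|'C_G[g]| %| p ^ 3 by rewrite -oG cardSg ?subsetIl.
rewrite oC leq_exp2l ?prime_gt1 // -ltnS ltn_neqAle e3 andbT.
apply: contraNneq gZ => e_3; have CG : 'C_G[g] = G.
  by apply/eqP; rewrite eqEcard subsetIl oG oC e_3 leqnn.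
by rewrite inE gG -sub_cent1 -CG subsetIr.
Qed.

Lemma cent1_noncentral_eq a b :
  a \in G :\: 'Z(G) -> b \in 'C_G[a] :\: 'Z(G) -> 'C_G[b] = 'C_G[a].
Proof.
move=> aGZ /setDP[bC bZ]; have bGZ : b \in G :\: 'Z(G).
  by rewrite inE bZ (subsetP (subsetIl G 'C[a])).
rewrite [LHS]cent1_noncentral //; apply/eqP; rewrite eqEcard mul_subG ?cycle_subG //.
  by rewrite (cent1_noncentral aGZ) !card_cycle_center ?leqnn.
by rewrite center_sub_cent1 //; case/setDP: aGZ.
Qed.

Lemma zclass_noncentral g : g \in G :\: 'Z(G) -> zclass p G g = 'C_G[g] :\: 'Z(G).
Proof.
move=> gGZ; have /setDP[gG gZ] := gGZ.
have og : #[g] = p by rewrite order_p3group //; apply: contraNneq gZ => ->.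
apply/setP=> x; rewrite inE (cent1_noncentral gGZ) /zclass inE.
apply/idP/idP.
  case/existsP=> l /andP[l0 /exists_inP[u uZ /eqP ->]].
  rewrite mem_mulg ?mem_cycle // andbT; apply: contra gZ; rewrite groupMr // => glZ.
  have gl1 : g ^+ l != 1 by rewrite -order_dvdn og gtnNdvd.
  have cyc_gl : <[g ^+ l]> = <[g]>.
    by apply/eqP; rewrite eqEcard cycleX -!orderE og order_p3group ?groupX ?leqnn.
  by rewrite -cycle_subG -cyc_gl cycle_subG.
case/andP=> xZ /mulsgP[_ u /cycleP[m ->] uZ x_def]; subst x.
rewrite -[g ^+ m]expg_mod_order og in xZ *.
have lp : m %% p < p by rewrite ltn_mod prime_gt0.
apply/existsP; exists (Ordinal lp); rewrite lt0n /=.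
apply/andP; split; last by apply/exists_inP; exists u.
by apply: contraNneq xZ => ->; rewrite mul1g.
Qed.

Lemma commg_zclass_neq1 g a b :
  g \in G :\: 'Z(G) -> a \in zclass p G g -> b \in G :\: 'Z(G) ->
  b \notin zclass p G g -> [~ b, a] != 1.
Proof.
move=> gGZ aK /setDP[bG bZ]; rewrite (zclass_noncentral gGZ) in aK *.
apply: contra => /commgP/esym/cent1P ba; rewrite inE bZ /=.
have aGZ : a \in G :\: 'Z(G) by case/setDP: aK => /setIP[aG _] aZ; rewrite inE aZ.
have bCa : b \in 'C_G[a] :\: 'Z(G) by rewrite inE bZ inE bG cent1C.
by rewrite -(cent1_noncentral_eq gGZ aK) -(cent1_noncentral_eq aGZ bCa) subcent1_id.
Qed.

Lemma coset_class a x : a \in G -> x \in a ^: G -> coset 'Z(G) x = coset 'Z(G) a.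
Proof.
move=> aG /imsetP[y yG ->]; have aZy := commg_center aG yG.
by rewrite conjg_mulR morphM ?(subsetP nZG) ?groupR //= (coset_id aZy) mulg1.
Qed.

Lemma commg_class a b x :
  a \in G -> b \in G -> x \in a ^: G -> [~ b, x] = [~ b, a].
Proof.
move=> aG bG /imsetP[y yG ->]; have /setIP[_ /centP cGc] := commg_center aG yG.
rewrite conjg_mulR commgMJ; have /eqP-> : [~ b, [~ a, y]] == 1 by apply/commgP/esym/cGc.
by rewrite mul1g; apply/conjg_fixP/commgP/esym/cGc/groupR.
Qed.

Lemma coset_prod_class a (s : seq gT) :
  a \in G -> {subset s <= a ^: G} ->
  coset 'Z(G) (\prod_(x <- s) x) = coset 'Z(G) a ^+ size s.
Proof.
move=> aG sa; have sN x : x \in s -> x \in 'N('Z(G)).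
  by move/sa/(subsetP (class_subG aG (subxx G)))/(subsetP nZG).
rewrite big_seq morph_prod // -big_seq (eq_big_seq (fun=> coset 'Z(G) a)).
  by rewrite big_const_seq count_predT iter_mulg_1.
by move=> x /sa/(coset_class aG).
Qed.

(* Moving [b] to the right across [j] terms [x] with [[~ b, x] = w] multiplies the
   product by [w ^+ j], and the powers of [w] exhaust the centre. *)
Lemma product_one_rearrange (A R : seq gT) (b w : gT) :
  {subset A ++ b :: R <= G} -> \prod_(x <- A ++ b :: R) x \in 'Z(G) ->
  {in A, forall x, [~ b, x] = w} -> w \in 'Z(G) -> w != 1 -> (p.-1 <= size A)%N ->
  product_one (A ++ b :: R).
Proof.
move=> sG prodZ bA_w wZ w1 size_A; have /setIP[wG /centP cGw] := wZ.
have : (\prod_(x <- A ++ b :: R) x)^-1 \in <[w]> by rewrite cycle_center ?groupV.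
case/cyclePmin=> j; rewrite order_p3group // => jp prod_w.
have size_drop : size (drop (size A - j) A) = j.
  by rewrite size_drop subKn // (leq_trans _ size_A) // -ltnS prednK ?prime_gt0.
split; first by move/(congr1 size); rewrite size_cat addnS.
exists (take (size A - j) A ++ b :: drop (size A - j) A ++ R); split.
  rewrite -{1}(cat_take_drop (size A - j) A) -catA perm_cat2l.
  exact/permPl/(perm_catCA _ [:: b]).
rewrite (prod_cat_commg _ (w := w)) => [|x /mem_drop/bA_w //|x xAR].
  by rewrite catA cat_take_drop size_drop -prod_w mulgV.
apply: cGw; apply: sG; move: xAR; rewrite !mem_cat inE => /orP[/mem_drop-> // | ->].
by rewrite !orbT.
Qed.

Lemma product_one_class_cat g a (A R : seq gT) b :
  g \in G :\: 'Z(G) -> a \in zclass p G g -> {subset A <= a ^: G} -> (p <= size A)%N ->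
  {subset b :: R <= G} -> b \notin 'Z(G) -> b \notin zclass p G g ->
  coset 'Z(G) (\prod_(x <- b :: R) x) \in [set 1; coset 'Z(G) a] ->
  exists k, product_one (take k A ++ b :: R).
Proof.
move=> gGZ aK Aa size_A sG bZ bK prodB.
have aG : a \in G by move: aK; rewrite zclass_noncentral // => /setDP[/setIP[]].
have AG : {subset A <= G} by move=> x /Aa; apply/subsetP/class_subG.
pose k := if coset 'Z(G) (\prod_(x <- b :: R) x) == 1 then p else p.-1.
have size_k : size (take k A) = k.
  by rewrite size_takel // /k; case: ifP => // _; apply: leq_trans (leq_pred p) size_A.
have sAG : {subset take k A ++ b :: R <= G}.
  by move=> x; rewrite mem_cat => /orP[/mem_take/AG | /sG].
exists k; apply: (product_one_rearrange (w := [~ b, a])) => //.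
- apply: coset_idr; first exact/(subsetP nZG)/group_prod_seq.
  rewrite big_cat morphM ?(subsetP nZG) ?group_prod_seq //=; last by move=> x /mem_take/AG.
  rewrite (coset_prod_class aG) => [|x /mem_take/Aa //]; rewrite size_k /k.
  move: prodB; rewrite !inE; case: eqP => [-> _ | _ /eqP->].
    by rewrite mulg1 -morphX ?(subsetP nZG) // -expG expg_exponent // morph1.
  rewrite -expgSr prednK ?prime_gt0 // -morphX ?(subsetP nZG) //.
  by rewrite -expG expg_exponent // morph1.
- by move=> x /mem_take/Aa/(commg_class aG (sG b (mem_head b R))).
- by apply: commg_center => //; apply: sG; rewrite mem_head.
- by apply: commg_zclass_neq1 gGZ aK _ bK; rewrite inE bZ sG ?mem_head.
by rewrite size_k /k; case: ifP; rewrite ?leq_pred.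
Qed.

Lemma exists_mask_coset_prod (s : seq gT) a :
  {subset s <= G} -> a \in G :\: 'Z(G) -> (2 * p.-1 <= size s)%N ->
  exists m : bitseq, mask m s != [::] /\
    coset 'Z(G) (\prod_(x <- mask m s) x) \in [set 1; coset 'Z(G) a].
Proof.
move=> sG /setDP[aG aZ] size_s.
have [||||m [m_ne prod_m]] := abelem_mask_prod1_or p_pr quotient_center_abelem
  (s := map (coset 'Z(G)) s) (t := coset 'Z(G) a).
- by move=> _ /mapP[x /sG xG ->]; apply: mem_quotient.
- exact: mem_quotient.
- by apply: contra aZ => /eqP; apply: coset_idr; apply: (subsetP nZG).
- by rewrite size_map logn_quotient_center.
exists m; rewrite -map_mask big_map in m_ne prod_m; split.
  by apply: contraNneq m_ne => ->.
rewrite big_seq morph_prod -?big_seq // => x /mem_mask/sG.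
exact: (subsetP nZG).
Qed.

End Heisenberg.

Theorem theorem2p8 (gT : finGroupType) (G : {group gT}) (p : nat)
  (S : seq gT) :
  prime p -> odd p ->
  #|G| = (p ^ 3)%N -> ~~ abelian G -> exponent G = p ->
  {subset S <= G} ->
  size S = (3 * p - 2)%N ->
  (forall x, x \in S -> x \notin 'Z(G)) ->
  (exists2 g, g \in G :\: 'Z(G) &
     count (mem (zclass p G g)) S = p /\
     (forall x y, x \in S -> y \in S ->
        x \in zclass p G g -> y \in zclass p G g -> y \in x ^: G)) ->
  exists T : seq gT, submultiset T S /\ product_one T.
Proof.
move=> p_pr _ oG ncG expG SG size_S S_Z [g gGZ [count_K conj_K]].
set K := zclass p G g; set SK := [seq x <- S | x \in K]; set SR := [seq x <- S | x \notin K].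
have size_SK : size SK = p by rewrite size_filter.
have size_SR : size SR = (2 * p.-1)%N.
  have -> : size SR = count (predC (mem K)) S by rewrite size_filter.
  have := count_predC (mem K) S; rewrite count_K size_S.
  by have := prime_gt0 p_pr; lia.
have [a aSK] : exists a, a \in SK by exists (nth 1 SK 0); rewrite mem_nth ?size_SK ?prime_gt0.
have [aK aS] : a \in K /\ a \in S by move: aSK; rewrite mem_filter => /andP.
have SK_a : {subset SK <= a ^: G}.
  by move=> x; rewrite mem_filter => /andP[xK xS]; apply: conj_K.
have sSR_G : {subset SR <= G} by move=> x; rewrite mem_filter => /andP[_ /SG].
have aGZ : a \in G :\: 'Z(G) by rewrite inE S_Z ?SG.
have [m [B_ne prod_B]] := exists_mask_coset_prod p_pr oG ncG expG sSR_G aGZ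
  (eq_leq (esym size_SR)).
case def_B: (mask m SR) B_ne prod_B => [//|b R] _ prod_B.
have /mem_mask bSR : b \in mask m SR by rewrite def_B mem_head.
have [bK bS] : b \notin K /\ b \in S by move: bSR; rewrite mem_filter => /andP.
have sBG : {subset b :: R <= G} by rewrite -def_B => x /mem_mask/sSR_G.
have [k T_one] := product_one_class_cat p_pr oG ncG expG gGZ aK SK_a
  (eq_leq (esym size_SK)) sBG (S_Z b bS) bK prod_B.
exists (take k SK ++ b :: R); split=> //.
by rewrite -def_B; apply: submultiset_cat_filter; [exact: take_subseq | exact: mask_subseq].
Qed.
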